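(* For every state $n\in\mathbb{N}$ of the transducer $\mathcal{D}_{p/q}$ and every letter $b\in A_q$, there exist a unique state $m\in\mathbb{N}$ and a unique letter $c\in A_q$ such that $n\xrightarrow{b|c} m$ is a transition of $\mathcal{D}_{p/q}$.
   Context: Let $p>q>1$ be coprime integers, $A_q=\{0,1,\dots,q-1\}$ and $B=\{p-(2q-1),\dots,p-1\}$ (a set of integers, possibly containing negative ones). For $n\in\mathbb{N}$ and $a\in\mathbb{Z}$, let $\tau(n,a)=\frac{np+a}{q}$, defined only when $q$ divides $np+a$. For $a\in B$ let $\omega(a)=\{(b,c)\in A_q\times A_q : c-b=a-(p-q)\}$. The transducer $\mathcal{D}_{p/q}$ has state set $\mathbb{N}$, input and output alphabet $A_q$, initial state $0$, all states final, and has a transition $n\xrightarrow{b|c}\tau(n,a)$ (input $b$, output $c$) for every $n\in\mathbb{N}$, every $a\in B$ such that $\tau(n,a)$ is defined, and every $(b,c)\in\omega(a)$; it has no other transitions. *)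

From Stdlib Require Import ZArith Znumtheory.
Open Scope Z_scope.

Definition inA (q x : Z) : Prop := 0 <= x < q.

Definition inB (p q a : Z) : Prop := p - (2 * q - 1) <= a <= p - 1.

(* tau(n,a) = (n p + a)/q, defined only when q | n p + a;
   tau_is p q n a m  <->  tau(n,a) is defined and equals m. *)
Definition tau_is (p q n a m : Z) : Prop :=
  (q | n * p + a) /\ m * q = n * p + a.

Definition in_omega (p q a b c : Z) : Prop :=
  inA q b /\ inA q c /\ c - b = a - (p - q).

Definition transition (p q : Z) (n : nat) (b c : Z) (m : nat) : Prop :=
  exists a : Z, inB p q a /\ tau_is p q (Z.of_nat n) a (Z.of_nat m)
                /\ in_omega p q a b c.

(* A transition n --b|c--> m exists exactly when c, b lie in A_q and
   (m+1) q = (n+1) p + (c - b): the digit a of B is forced to be c - b + p - q,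
   and then both a in B and q | n p + a are automatic.  Given n and b, the
   equation fixes c as the residue of b - (n+1) p modulo q, hence also m, and
   q < p makes the right-hand side positive so that m is a natural number. *)
From Stdlib Require Import ZArith Lia.
Open Scope Z_scope.

Lemma transition_iff (p q : Z) (n : nat) (b c : Z) (m : nat) :
  transition p q n b c m <->
  inA q b /\ inA q c /\
  (Z.of_nat m + 1) * q = (Z.of_nat n + 1) * p + (c - b).
Proof.
  unfold transition, inB, tau_is, in_omega, inA; split.
  - intros (a & _ & (_ & Hm) & Hb & Hc & Ha); repeat split; lia.
  - intros (Hb & Hc & Hm); exists (c - b + p - q); repeat split; try lia.
    exists (Z.of_nat m); lia.
Qed.

Lemma inA_eq_of_dvd_sub (q c c' : Z) :
  inA q c -> inA q c' -> (q | c' - c) -> c' = c.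
Proof.
  unfold inA; intros Hc Hc' [k Hk].
  assert (k = 0) by nia.
  lia.
Qed.

Lemma dvd_add_opp_mod (q x : Z) : 0 < q -> (q | x + (- x) mod q).
Proof.
  intros Hq; exists (- ((- x) / q)).
  pose proof (Z.div_mod (- x) q ltac:(lia)); lia.
Qed.

Theorem mainTheorem1 (p q : Z) (hq : 1 < q) (hpq : q < p) (hcop : Z.gcd p q = 1)
  (n : nat) (b : Z) (hb : inA q b) :
  exists m : nat, exists c : Z,
    transition p q n b c m /\
    (forall (m' : nat) (c' : Z), transition p q n b c' m' -> m' = m /\ c' = c).
Proof.
  set (x := (Z.of_nat n + 1) * p - b).
  set (c := (- x) mod q).
  assert (Hc : inA q c) by (apply Z.mod_pos_bound; lia).
  destruct (dvd_add_opp_mod q x ltac:(lia)) as [k Hk]; fold c in Hk.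
  assert (Hk_pos : 1 <= k).
  { unfold inA, x in *; nia. }
  exists (Z.to_nat (k - 1)), c; split.
  - apply transition_iff; split; [exact hb | split; [exact Hc |]].
    rewrite Z2Nat.id by lia; unfold x in Hk; lia.
  - intros m' c' [_ [Hc' Hm']]%transition_iff.
    assert (Hcc : c' = c).
    { apply (inA_eq_of_dvd_sub q); [exact Hc | exact Hc' |].
      exists (Z.of_nat m' - (k - 1)); unfold x in Hk; lia. }
    subst c'; split; [| reflexivity].
    assert (Z.of_nat m' + 1 = k) by (unfold x in Hk; nia).
    lia.
Qed.
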